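(* Let $N\ge1$, $K>0$, $r_1,\dots,r_N>0$, let $(\mu_{ij})$ be a nonnegative, symmetric, irreducible $N\times N$ matrix, and let $\bar v$ be the unique positive stationary solution of $$\frac{dv_i}{dt}=v_i\left[r_i-\frac{1}{K}\sum_{j=1}^Nr_jv_j\right]+\sum_{j=1}^N\mu_{ij}(v_j-v_i),\qquad i=1,\dots,N.$$ Let $\bar v^\perp=\{h\in\mathbb{R}^N:\sum_ih_i\bar v_i=0\}$ and $\mathcal{E}(h)=\sum_ih_i^2$. Then there exists $C_1>0$ such that for all $h\in\bar v^\perp$, $$C_1\mathcal{E}(h)\le\sum_{i,j=1}^N\mu_{ij}\bar v_i\bar v_j\left(\frac{h_i}{\bar v_i}-\frac{h_j}{\bar v_j}\right)^2.$$ Moreover, this holds with $C_1=\lambda_2$, where $\lambda_2$ is the smallest strictly positive eigenvalue $\lambda$ of the linear eigenvalue problem $$h_i\sum_{j=1}^N\mu_{ij}\frac{\bar v_j}{\bar v_i}-\sum_{j=1}^N\mu_{ij}h_j=\lambda h_i,\qquad i=1,\dots,N.$$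
   Context: A stationary solution is a vector at which the right-hand side vanishes for every $i$; positive means all components strictly positive. *)

From HB Require Import structures.
From mathcomp Require Import all_boot all_order all_algebra.
From mathcomp Require Import reals.
Set Implicit Arguments. Unset Strict Implicit. Unset Printing Implicit Defensive.
Import Order.TTheory GRing.Theory Num.Theory.
Local Open Scope ring_scope.

(* A square matrix is irreducible iff its directed graph (edge i -> j when
   A i j != 0) is strongly connected. *)
Definition irreducible_mx (R : realType) (N : nat) (A : 'M[R]_N) : Prop :=
  forall i j : 'I_N, connect (fun k l => A k l != 0) i j.

Definition rhs (R : realType) (N : nat) (K : R) (r : 'I_N -> R)
  (mu : 'M[R]_N) (v : 'I_N -> R) (i : 'I_N) : R :=
  v i * (r i - K^-1 * \sum_(j < N) r j * v j) + \sum_(j < N) mu i j * (v j - v i).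

Definition stationary (R : realType) (N : nat) (K : R) (r : 'I_N -> R)
  (mu : 'M[R]_N) (v : 'I_N -> R) : Prop :=
  forall i, rhs K r mu v i = 0.

Definition energy (R : realType) (N : nat) (h : 'I_N -> R) : R :=
  \sum_(i < N) h i ^+ 2.

Definition dform (R : realType) (N : nat) (mu : 'M[R]_N) (vb h : 'I_N -> R) : R :=
  \sum_(i < N) \sum_(j < N)
     mu i j * vb i * vb j * (h i / vb i - h j / vb j) ^+ 2.

Definition lin_eigenvalue (R : realType) (N : nat) (mu : 'M[R]_N)
  (vb : 'I_N -> R) (lam : R) : Prop :=
  exists h : 'I_N -> R, (exists i, h i != 0) /\
    forall i, h i * (\sum_(j < N) mu i j * (vb j / vb i))
              - \sum_(j < N) mu i j * h j = lam * h i.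

Definition smallest_pos_eigenvalue (R : realType) (N : nat) (mu : 'M[R]_N)
  (vb : 'I_N -> R) (lam : R) : Prop :=
  [/\ lin_eigenvalue mu vb lam, 0 < lam &
      forall l, lin_eigenvalue mu vb l -> 0 < l -> lam <= l].

From HB Require Import structures.
From mathcomp Require Import all_boot all_order all_algebra.
From mathcomp Require Import reals.
From mathcomp Require Import boolp classical_sets topology normedtype derive.
From mathcomp Require Import ring lra.
Import Order.TTheory GRing.Theory Num.Theory.
Import numFieldNormedType.Exports.
Set Implicit Arguments. Unset Strict Implicit. Unset Printing Implicit Defensive.
Local Open Scope ring_scope.

(* Write L for the operator of the eigenvalue problem (eig_op below).  Since mu is
   symmetric, summation by parts gives dform h = 2 <h, L h>, and L vb = 0.  On the
   compact set of unit vectors of vb^perp the form dform attains a minimum m; it is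
   positive because, mu being irreducible, dform vanishes only on multiples of vb.
   Homogeneity gives m E(h) <= dform h on vb^perp, and the first variation at a
   minimizer hs shows L hs = (m/2) hs, so lambda_2 <= m/2 <= m. *)

Lemma continuous_sum (R : numFieldType) (T : topologicalType) (I : Type)
    (s : seq I) (f : I -> T -> R) :
  (forall i, continuous (f i)) -> continuous (fun x => \sum_(i <- s) f i x).
Proof.
move=> cf x; elim: s => [|a s IH].
  rewrite (_ : (fun x => _) = fun=> 0); first exact: cvg_cst.
  by apply/funext => y; rewrite big_nil.
rewrite (_ : (fun x => _) = (fun x => f a x + \sum_(i <- s) f i x)).
  exact: (continuousD (cf a x) IH).
by apply/funext => y; rewrite big_cons.
Qed.

Section Energy.
Variables (R : realType) (N : nat).
Implicit Types (h u w : 'I_N -> R) (t c : R).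

Definition dot h u : R := \sum_(i < N) h i * u i.

Lemma energy_ge0 h : 0 <= energy h.
Proof. by apply: sumr_ge0 => i _; rewrite sqr_ge0. Qed.

Lemma energy_eq0 h : (energy h == 0) = [forall i, h i == 0].
Proof.
rewrite psumr_eq0 => [|i _]; last exact: sqr_ge0.
apply/allP/forallP => [H i | H i _]; last by rewrite /= (eqP (H i)) expr0n.
by rewrite -sqrf_eq0; apply: (H i (mem_index_enum i)).
Qed.

Lemma dotZl c h w : dot (fun i => c * h i) w = c * dot h w.
Proof. by rewrite /dot mulr_sumr; apply: eq_bigr => i _ /=; ring. Qed.

Lemma dotDZl h u w t : dot (fun i => h i + t * u i) w = dot h w + t * dot u w.
Proof. by rewrite /dot mulr_sumr -big_split; apply: eq_bigr => i _ /=; ring. Qed.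

Lemma energyZ c h : energy (fun i => c * h i) = c ^+ 2 * energy h.
Proof. by rewrite /energy mulr_sumr; apply: eq_bigr => i _ /=; ring. Qed.

Lemma energyDZ h u t :
  energy (fun i => h i + t * u i) = energy h + 2 * t * dot h u + t ^+ 2 * energy u.
Proof.
by rewrite /energy /dot !mulr_sumr -!big_split; apply: eq_bigr => i _ /=; ring.
Qed.

Lemma energy_normalize h :
  0 < energy h -> energy (fun i => (Num.sqrt (energy h))^-1 * h i) = 1.
Proof.
by move=> Eh_gt0; rewrite energyZ exprVn sqr_sqrtr ?ltW // mulVf // gt_eqF.
Qed.

End Energy.

Lemma quad_ge0_lin_eq0 (R : realFieldType) (a b : R) :
  (forall t, 0 <= 2 * t * a + t ^+ 2 * b) -> a = 0.
Proof.
move=> quad_ge0; pose c := b ^+ 2 + 1.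
have c_gt0 : 0 < c by rewrite /c; nra.
have := quad_ge0 (- a / c).
have -> : 2 * (- a / c) * a + (- a / c) ^+ 2 * b = a ^+ 2 * (b - 2 * c) / c ^+ 2.
  by field; rewrite gt_eqF.
rewrite pmulr_lge0 ?invr_gt0 ?exprn_gt0 // nmulr_lge0; last by rewrite /c; nra.
by move=> a2_le0; apply/eqP; rewrite -sqrf_eq0 eq_le a2_le0 sqr_ge0.
Qed.

Lemma sum_sym_mul_diff (R : comRingType) (n : nat) (w : 'I_n -> 'I_n -> R)
    (a b : 'I_n -> R) :
  (forall i j, w i j = w j i) ->
  \sum_(i < n) \sum_(j < n) w i j * ((a i - a j) * (b i - b j)) =
  2 * \sum_(i < n) \sum_(j < n) w i j * (a i - a j) * b i.
Proof.
move=> w_sym.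
have swap : \sum_(i < n) \sum_(j < n) w i j * (a j - a i) * b j =
            \sum_(i < n) \sum_(j < n) w i j * (a i - a j) * b i.
  rewrite exchange_big; apply: eq_bigr => i _.
  by apply: eq_bigr => j _; rewrite w_sym.
rewrite mulr2n mulrDl mul1r -{2}swap -big_split; apply: eq_bigr => i _ /=.
by rewrite -big_split; apply: eq_bigr => j _ /=; ring.
Qed.

Section DirichletForm.
Variables (R : realType) (N : nat) (mu : 'M[R]_N) (vb : 'I_N -> R).
Hypothesis mu_ge0 : forall i j, 0 <= mu i j.
Hypothesis mu_sym : forall i j, mu i j = mu j i.
Hypothesis vb_gt0 : forall i, 0 < vb i.
Implicit Types (h u : 'I_N -> R) (t c : R).

Definition dbilin h u : R := \sum_(i < N) \sum_(j < N)
  mu i j * vb i * vb j * ((h i / vb i - h j / vb j) * (u i / vb i - u j / vb j)).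

Definition eig_op h i : R :=
  h i * (\sum_(j < N) mu i j * (vb j / vb i)) - \sum_(j < N) mu i j * h j.

Lemma dformZ c h : dform mu vb (fun i => c * h i) = c ^+ 2 * dform mu vb h.
Proof.
rewrite /dform mulr_sumr; apply: eq_bigr => i _.
rewrite mulr_sumr; apply: eq_bigr => j _ /=; rewrite !mulrA; ring.
Qed.

Lemma dformDZ h u t :
  dform mu vb (fun i => h i + t * u i) =
  dform mu vb h + 2 * t * dbilin h u + t ^+ 2 * dform mu vb u.
Proof.
rewrite /dform /dbilin !mulr_sumr -!big_split; apply: eq_bigr => i _ /=.
rewrite !mulr_sumr -!big_split; apply: eq_bigr => j _ /=.
rewrite !mulrDl !mulrDr; ring.
Qed.

Lemma dbilin_vb h : dbilin h vb = 0.
Proof.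
apply: big1 => i _; apply: big1 => j _.
by rewrite !divff ?gt_eqF // subrr !mulr0.
Qed.

Lemma dbilin_eig_op h u : dbilin h u = 2 * dot u (eig_op h).
Proof.
have w_sym i j : mu i j * vb i * vb j = mu j i * vb j * vb i by rewrite mu_sym; ring.
rewrite /dbilin.
have /= -> := sum_sym_mul_diff (fun i => h i / vb i) (fun i => u i / vb i) w_sym.
congr (2 * _); apply: eq_bigr => i _.
rewrite /eig_op mulrBr !mulr_sumr -sumrB; apply: eq_bigr => j _.
by field; rewrite !gt_eqF.
Qed.

Lemma dform_term_ge0 h i j :
  0 <= mu i j * vb i * vb j * (h i / vb i - h j / vb j) ^+ 2.
Proof. by rewrite mulr_ge0 ?sqr_ge0 // !mulr_ge0 // ltW. Qed.

Lemma dform_ge0 h : 0 <= dform mu vb h.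
Proof. by apply: sumr_ge0 => i _; apply: sumr_ge0 => j _; apply: dform_term_ge0. Qed.

Lemma dform_eq0_edge h k l : dform mu vb h = 0 -> mu k l != 0 ->
  h k / vb k = h l / vb l.
Proof.
move=> /eqP; rewrite psumr_eq0 => [|i _]; last first.
  by apply: sumr_ge0 => j _; apply: dform_term_ge0.
move=> /allP/(_ k (mem_index_enum k)) /=.
rewrite psumr_eq0 => [|j _]; last exact: dform_term_ge0.
move=> /allP/(_ l (mem_index_enum l)) /= mu_kl0 mu_kl.
move: mu_kl0; rewrite !mulf_eq0 (negbTE mu_kl) !(gt_eqF (vb_gt0 _)) /=.
by rewrite orbb subr_eq0 => /eqP.
Qed.

Hypothesis mu_irr : irreducible_mx mu.

Lemma dform_eq0_proportional h : dform mu vb h = 0 ->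
  forall i j, h i / vb i = h j / vb j.
Proof.
move=> dh0 i j; have /connectP [p p_path ->] := mu_irr i j.
elim: p i p_path => [|k p IH] i //= /andP [mu_ik p_path].
by rewrite (dform_eq0_edge dh0 mu_ik) IH.
Qed.

Lemma dform_gt0 h i0 : dot h vb = 0 -> h i0 != 0 -> 0 < dform mu vb h.
Proof.
move=> h_orth hi0; rewrite lt_def dform_ge0 andbT; apply/eqP => dh0.
have h_prop j : h j = h i0 / vb i0 * vb j.
  by rewrite (dform_eq0_proportional dh0 i0 j) divfK // gt_eqF.
have : dot h vb = h i0 / vb i0 * energy vb.
  by rewrite /dot /energy mulr_sumr; apply: eq_bigr => j _; rewrite h_prop; ring.
rewrite h_orth => /esym/eqP.
rewrite !mulf_eq0 invr_eq0 (negbTE hi0) (gt_eqF (vb_gt0 _)) /= energy_eq0.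
by move=> /forallP/(_ i0); rewrite gt_eqF.
Qed.

End DirichletForm.

Definition dform_minimizer (R : realType) (N : nat) (mu : 'M[R]_N)
    (vb hs : 'I_N -> R) : Prop :=
  [/\ dot hs vb = 0, energy hs = 1 &
      forall h, dot h vb = 0 -> energy h = 1 -> dform mu vb hs <= dform mu vb h].

Section Minimizer.
Variables (R : realType) (N : nat) (mu : 'M[R]_N) (vb hs : 'I_N -> R).
Hypothesis mu_ge0 : forall i j, 0 <= mu i j.
Hypothesis mu_sym : forall i j, mu i j = mu j i.
Hypothesis mu_irr : irreducible_mx mu.
Hypothesis vb_gt0 : forall i, 0 < vb i.
Hypothesis hs_min : dform_minimizer mu vb hs.

Let m := dform mu vb hs.

Lemma minimizer_gap h : dot h vb = 0 -> m * energy h <= dform mu vb h.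
Proof.
case: hs_min => _ _ hs_le h_orth.
have := energy_ge0 h; rewrite le0r => /orP[/eqP ->|Eh_gt0].
  by rewrite mulr0 dform_ge0.
have := hs_le _ _ (energy_normalize Eh_gt0); rewrite dotZl h_orth mulr0.
by rewrite dformZ exprVn sqr_sqrtr ?energy_ge0 // ler_pdivlMl // mulrC => /(_ erefl).
Qed.

Lemma minimizer_nonzero : exists i, hs i != 0.
Proof.
case: hs_min => _ hs1 _; apply/existsP; rewrite -negb_forall -energy_eq0 hs1.
exact: oner_neq0.
Qed.

Lemma minimizer_gt0 : 0 < m.
Proof.
by case: minimizer_nonzero hs_min => i hi0 [hs_orth _ _]; apply: dform_gt0 hi0.
Qed.

Lemma minimizer_euler_lagrange w : dot w vb = 0 -> dbilin mu vb hs w = m * dot hs w.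
Proof.
case: hs_min => hs_orth hs1 _ w_orth; apply/eqP; rewrite -subr_eq0; apply/eqP.
apply: (@quad_ge0_lin_eq0 _ _ (dform mu vb w - m * energy w)) => t.
have := @minimizer_gap (fun i => hs i + t * w i).
rewrite dotDZl hs_orth w_orth mulr0 addr0 dformDZ energyDZ hs1 -/m => /(_ erefl).
lra.
Qed.

Lemma minimizer_eigen i : eig_op mu vb hs i = m / 2 * hs i.
Proof.
case: hs_min => hs_orth _ _.
pose w j := eig_op mu vb hs j - m / 2 * hs j.
have w_orth : dot w vb = 0.
  have -> : dot w vb = dbilin mu vb hs vb / 2 - m / 2 * dot hs vb.
    rewrite dbilin_eig_op // /dot !mulr_sumr mulr_suml -sumrB.
    by apply: eq_bigr => j _; rewrite /w; field.
  by rewrite dbilin_vb // hs_orth mul0r mulr0 subr0.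
have : energy w = (dbilin mu vb hs w - m * dot hs w) / 2.
  rewrite dbilin_eig_op // /energy /dot !mulr_sumr -sumrB mulr_suml.
  by apply: eq_bigr => j _; rewrite /w; field.
rewrite minimizer_euler_lagrange // subrr mul0r => /eqP.
by rewrite energy_eq0 => /forallP/(_ i); rewrite subr_eq0 => /eqP.
Qed.

Lemma minimizer_eigenvalue : lin_eigenvalue mu vb (m / 2).
Proof. by exists hs; split; [exact: minimizer_nonzero | exact: minimizer_eigen]. Qed.

End Minimizer.

Section Compactness.
Variables (R : realType) (N : nat) (mu : 'M[R]_N) (vb : 'I_N -> R).
Local Open Scope classical_set_scope.

Let coords (v : 'rV[R]_N) (i : 'I_N) : R := v ord0 i.

Let coordsK (h : 'I_N -> R) : coords (\row_j h j) = h.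
Proof. by apply/funext => i; rewrite /coords mxE. Qed.

Let coords_continuous i : continuous (fun v => coords v i).
Proof. exact: coord_continuous. Qed.

Let coordsM_continuous i c : continuous (fun v => coords v i * c).
Proof.
by move=> v; exact: (continuousM (@coords_continuous i v) (@cst_continuous _ _ c v)).
Qed.

Let continuous_sqr (f : 'rV[R]_N -> R) :
  continuous f -> continuous (fun v => f v ^+ 2).
Proof. by move=> cf v; exact: (continuousM (cf v) (cf v)). Qed.

Lemma exists_dform_minimizer :
  (exists h, dot h vb = 0 /\ energy h = 1) -> exists hs, dform_minimizer mu vb hs.
Proof.
move=> [h0 [h0_orth h0_unit]].
pose S := (fun v => energy (coords v)) @^-1` [set 1] `&`
          (fun v => dot (coords v) vb) @^-1` [set 0].
have energy_cont : continuous (fun v => energy (coords v)).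
  by apply: continuous_sum => i; apply: continuous_sqr.
have dot_cont : continuous (fun v => dot (coords v) vb).
  by apply: continuous_sum => i; exact: coordsM_continuous.
have dform_cont : continuous (fun v => dform mu vb (coords v)).
  apply: continuous_sum => i; apply: continuous_sum => j v.
  apply: (continuousM (@cst_continuous _ _ (mu i j * vb i * vb j) v)).
  apply: continuous_sqr => {}v.
  exact: (continuousB (@coordsM_continuous i _ v) (@coordsM_continuous j _ v)).
have S_closed : closed S.
  apply: closedI.
    by apply: preimage_closed; [move=> v _; exact: energy_cont | exact: closed_eq].
  by apply: preimage_closed; [move=> v _; exact: dot_cont | exact: closed_eq].
have S_cube : S `<=` [set v | forall i, `[-1, 1] (coords v i)].
  move=> v [v_unit _] i /=; rewrite in_itv /=.
  have vi2_le1 : coords v i ^+ 2 <= 1.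
    rewrite -v_unit /energy (bigD1 i) //= lerDl.
    by apply: sumr_ge0 => k _; rewrite sqr_ge0.
  by apply/andP; split; nra.
have S_compact : compact S.
  apply: subclosed_compact S_closed _ S_cube.
  exact: (rV_compact (fun=> @segment_compact R (-1) 1)).
have S0 : S !=set0 by exists (\row_j h0 j); rewrite /S /= coordsK.
have [c cS c_min] := compact_EVT_min S0 S_compact (continuous_subspaceT dform_cont).
move: cS; rewrite inE => -[c_unit c_orth].
exists (coords c); split => // h h_orth h_unit.
by rewrite -(coordsK h); apply: c_min; rewrite inE /S /= coordsK.
Qed.

End Compactness.

Theorem lemma5p3 (R : realType) (N : nat) (K : R) (r : 'I_N -> R)
  (mu : 'M[R]_N) (vb : 'I_N -> R) :
  (0 < N)%N -> 0 < K -> (forall i, 0 < r i) ->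
  (forall i j, 0 <= mu i j) -> (forall i j, mu i j = mu j i) ->
  irreducible_mx mu ->
  (forall i, 0 < vb i) -> stationary K r mu vb ->
  (exists2 C1 : R, 0 < C1 &
     forall h : 'I_N -> R, \sum_(i < N) h i * vb i = 0 ->
       C1 * energy h <= dform mu vb h)
  /\
  (forall lam2 : R, smallest_pos_eigenvalue mu vb lam2 ->
     forall h : 'I_N -> R, \sum_(i < N) h i * vb i = 0 ->
       lam2 * energy h <= dform mu vb h).
Proof.
move=> _ _ _ mu_ge0 mu_sym mu_irr vb_gt0 _.
have [unit_orth|no_unit_orth] := pselect (exists h, dot h vb = 0 /\ energy h = 1).
  have [hs hs_min] := exists_dform_minimizer mu unit_orth.
  have m_gt0 := minimizer_gt0 mu_ge0 mu_irr vb_gt0 hs_min.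
  have gap := minimizer_gap mu_ge0 vb_gt0 hs_min.
  split; first by exists (dform mu vb hs).
  move=> lam2 [_ _ lam2_min] h /gap; apply: le_trans.
  rewrite ler_wpM2r ?energy_ge0 //.
  have := lam2_min _ (minimizer_eigenvalue mu_ge0 mu_sym vb_gt0 hs_min).
  by rewrite divr_gt0 // => /(_ isT); lra.
(* vb^perp contains no unit vector only when N = 1, where it is {0}. *)
have orth_energy0 h : dot h vb = 0 -> energy h = 0.
  move=> h_orth; have := energy_ge0 h; rewrite le0r => /orP[/eqP //|Eh_gt0].
  case: no_unit_orth; exists (fun i => (Num.sqrt (energy h))^-1 * h i).
  by rewrite dotZl h_orth mulr0 energy_normalize.
split; first by exists 1 => // h /orth_energy0 ->; rewrite mulr0 dform_ge0.
by move=> lam2 _ h /orth_energy0 ->; rewrite mulr0 dform_ge0.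
Qed.
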